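(* Let $k$ be a positive integer. For all positive integers $m,n$, $R_k^m\cong R_k^n$ if and only if $m\equiv n\pmod k$.
   Context: $\mathbb{N}=\{1,2,3,\dots\}$. $R$ denotes the ring of all $\mathbb{N}\times\mathbb{N}$ integer matrices with only finitely many nonzero entries in each row and each column, with entrywise addition and multiplication $(AB)_{i,j}=\sum_{l\ge1}a_{i,l}b_{l,j}$. Fix a positive integer $k$. Partition $\mathbb{N}$ into consecutive blocks $J_1=\{1\}$ and, for $m\ge2$, $J_m=\{2+k(m-2),\dots,1+k(m-1)\}$. For $A\in R$, the block $A^{m,n}$ is the submatrix with rows indexed by $J_m$ and columns by $J_n$. $R_k$ is the subring of $A\in R$ such that for all but finitely many pairs $(m,n)$ with $m,n\ge2$, $A^{m,n}=cI_k$ for some integer $c$. For a ring $S$, $S^n$ is the free left $S$-module of $n$-tuples with componentwise operations; $S^m\cong S^n$ means there is a bijective left-$S$-linear map $S^m\to S^n$, equivalently there exist $X\in M_{m\times n}(S)$, $Y\in M_{n\times m}(S)$ with $XY=I_m$, $YX=I_n$. *)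

From mathcomp Require Import all_boot all_order all_algebra.
Set Implicit Arguments. Unset Strict Implicit. Unset Printing Implicit Defensive.
Import GRing.Theory Num.Theory.
Local Open Scope ring_scope.

(* Infinite integer matrices, indexed 0-based: paper index i corresponds to i-1 here. *)
Definition infmx := nat -> nat -> int.

Definition row_finite (A : infmx) : Prop :=
  forall i : nat, exists N : nat, forall j : nat, (N <= j)%N -> A i j = 0.
Definition col_finite (A : infmx) : Prop :=
  forall j : nat, exists N : nat, forall i : nat, (N <= i)%N -> A i j = 0.
Definition inR (A : infmx) : Prop := row_finite A /\ col_finite A.

(* Blocks (0-based): J_1 = {0}; for b >= 0 the block J_{b+2} is
   {1 + k*b + s | s < k}. *)
Definition inRk (k : nat) (A : infmx) : Prop :=
  inR A /\
  exists B : nat, forall b b' : nat, (B <= b)%N \/ (B <= b')%N ->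
    exists c : int, forall s t : nat, (s < k)%N -> (t < k)%N ->
      A (1 + k * b + s)%N (1 + k * b' + t)%N = (if s == t then c else 0).

Definition idR : infmx := fun i j => if i == j then 1 else 0.
Definition zeroR : infmx := fun _ _ => 0.

Definition mxR (a b : nat) := 'I_a -> 'I_b -> infmx.

(* (X Y)_{pq} = sum_r X_{pr} Y_{rq}, with products in R:
   ((X Y)_{pq})_{ij} = sum_r sum_l (X_{pr})_{il} (Y_{rq})_{lj}, the inner sum
   being finite by row-finiteness; stated as eventual stabilization of
   truncated sums. *)
Definition mx_prod_is {a b c : nat} (X : mxR a b) (Y : mxR b c) (Z : mxR a c) : Prop :=
  forall (p : 'I_a) (q : 'I_c) (i j : nat), exists N : nat, forall M : nat, (N <= M)%N ->
    \sum_(r < b) \sum_(l < M) X p r i l * Y r q l j = Z p q i j.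

Definition mx_idR (a : nat) : mxR a a := fun p q => if p == q then idR else zeroR.

(* R_k^m is isomorphic to R_k^n as left R_k-modules, via the matrix criterion. *)
Definition Rk_free_iso (k m n : nat) : Prop :=
  exists (X : mxR m n) (Y : mxR n m),
    (forall p q, inRk k (X p q)) /\ (forall q p, inRk k (Y q p)) /\
    mx_prod_is X Y (@mx_idR m) /\ mx_prod_is Y X (@mx_idR n).

From mathcomp Require Import all_boot all_order all_algebra.
From mathcomp Require Import zify ring.
Set Implicit Arguments. Unset Strict Implicit. Unset Printing Implicit Defensive.
Import GRing.Theory.

(* Invariance: let X, Y be mutually inverse matrices over R_k, and choose B so
   that all their entries are scalar k x k blocks beyond the first B blocks
   (and vanish in row 0 beyond them).  Truncate traces to the first
   H = 1 + kB indices: for long enough inner sums, the truncated trace of XY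
   is mH and that of YX is nH.  Their difference only involves products of
   an entry above H with one below, grouped by pairs of blocks, and each
   group is k times a product of two block scalars.  So k divides (m - n)H,
   and H = 1 mod k.
   Construction: R_k^m and R_k^(m+kt) are isomorphic via a permutation
   matrix, which sends the first t blocks (enumerated across all m
   coordinates) to index 0 of the kt new coordinates and shifts the remaining
   blocks onto blocks; hence each of its blocks is 0 or I_k. *)

Lemma divn_block k b s : s < k -> (k * b + s) %/ k = b.
Proof. by move=> hs; rewrite mulnC divnMDl ?divn_small ?addn0 //; lia. Qed.

Lemma modn_block k b s : s < k -> (k * b + s) %% k = s.
Proof. by move=> hs; rewrite mulnC modnMDl modn_small. Qed.

Lemma eqn_block k b b' s s' : s < k -> s' < k ->
  (k * b + s == k * b' + s') = (b == b') && (s == s').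
Proof.
move=> hs hs'; apply/eqP/andP => [E|[/eqP-> /eqP->]] //.
by split; apply/eqP; [rewrite -(divn_block b hs) E divn_block | rewrite -(modn_block b hs) E modn_block].
Qed.

Lemma sum_ord_eq (R : nmodType) (N c : nat) (v : R) :
  c < N -> (\sum_(i < N) (if (i : nat) == c then v else 0) = v)%R.
Proof. by move=> hc; rewrite -big_mkcond (big_pred1 (Ordinal hc)). Qed.

Lemma big_nat_blocks (R : nmodType) (F : nat -> R) c k D :
  (\sum_(c <= l < c + k * D) F l)%R = (\sum_(b < D) \sum_(s < k) F (c + k * b + s)%N)%R.
Proof.
elim: D => [|D IH]; first by rewrite muln0 addn0 big_geq // big_ord0.
rewrite big_ord_recr /= -IH (@big_cat_nat _ _ _ (c + k * D)) /=; last 2 first.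
- exact: leq_addr.
- by rewrite leq_add2l leq_mul2l ltnW ?orbT.
congr (_ + _)%R; rewrite -{1}[c + k * D]add0n big_addn.
have -> : c + k * D.+1 - (c + k * D) = k by rewrite mulnS; lia.
by rewrite big_mkord; apply: eq_bigr => s _; rewrite addnC.
Qed.

Lemma truncated_trace_swap (R : zmodType) (F : nat -> nat -> R) H M : H <= M ->
  (\sum_(i < H) \sum_(l < M) F i l - \sum_(l < H) \sum_(i < M) F i l =
   \sum_(0 <= i < H) \sum_(H <= l < M) F i l - \sum_(0 <= l < H) \sum_(H <= i < M) F i l)%R.
Proof.
move=> hHM; have split_at_H (G : nat -> nat -> R) :
    (\sum_(i < H) \sum_(l < M) G i l = \sum_(0 <= i < H) \sum_(0 <= l < H) G i l
                                     + \sum_(0 <= i < H) \sum_(H <= l < M) G i l)%R.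
  rewrite -big_split /=; transitivity (\sum_(0 <= i < H) \sum_(l < M) G i l)%R.
    by rewrite big_mkord.
  by apply: eq_bigr => i _; rewrite -(@big_cat_nat _ _ _ H) // big_mkord.
rewrite split_at_H (split_at_H (fun l i => F i l)) (exchange_big_nat _ 0 H 0 H) /=.
by rewrite [X in (X - _)%R]addrC addrKA.
Qed.

Definition eventually (P : nat -> Prop) : Prop := exists N, forall M, N <= M -> P M.

Lemma eventually_and (P Q : nat -> Prop) :
  eventually P -> eventually Q -> eventually (fun M => P M /\ Q M).
Proof.
move=> [N1 h1] [N2 h2]; exists (maxn N1 N2) => M; rewrite geq_max => /andP[hM1 hM2].
by split; [apply: h1 | apply: h2].
Qed.

Lemma eventually_all_seq (T : eqType) (s : seq T) (P : T -> nat -> Prop) :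
  (forall x, x \in s -> eventually (P x)) -> eventually (fun M => forall x, x \in s -> P x M).
Proof.
elim: s => [|y s IH] h; first by exists 0 => M _ x; rewrite in_nil.
have [|N hN] := eventually_and (h y (mem_head y s)) (IH _).
  by move=> x hx; apply: h; rewrite in_cons hx orbT.
by exists N => M /hN[hy hs] x; rewrite in_cons => /predU1P[->|/hs].
Qed.

Lemma eventually_all_fin (T : finType) (P : T -> nat -> Prop) :
  (forall x, eventually (P x)) -> eventually (fun M => forall x, P x M).
Proof.
move=> h; have [N hN] := @eventually_all_seq _ (enum T) P (fun x _ => h x).
by exists N => M /hN hM x; apply: hM; rewrite mem_enum.
Qed.

Lemma eventually_all_ltn H (P : nat -> nat -> Prop) :
  (forall x, x < H -> eventually (P x)) -> eventually (fun M => forall x, x < H -> P x M).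
Proof.
move=> h; have [|N hN] := @eventually_all_seq _ (iota 0 H) P.
  by move=> x; rewrite mem_iota => /andP[_]; apply: h.
by exists N => M /hN hM x hx; apply: hM; rewrite mem_iota.
Qed.

Lemma inRk_transpose k (A C : infmx) :
  inRk k A -> (forall i j, C i j = A j i) -> inRk k C.
Proof.
move=> [[hr hc] [B hB]] hC; split.
  by split=> i; [have [N hN] := hc i | have [N hN] := hr i]; exists N => j /hN; rewrite hC.
exists B => b b' hb; have [|c hc'] := hB b' b; first by case: hb; [right|left].
by exists c => s s' hs hs'; rewrite hC hc' // eq_sym.
Qed.

Definition cancel_into (a b : nat) (f g : nat -> nat -> nat * nat) : Prop :=
  forall p i, (p < a)%N -> g (f p i).1 (f p i).2 = (p, i) /\ ((f p i).1 < b)%N.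

Definition perm_mxR (a b : nat) (f : nat -> nat -> nat * nat) : mxR a b :=
  fun p q i j => if f p i == ((q : nat), j) then 1%R else 0%R.
Arguments perm_mxR : clear implicits.

(* Blocks sent into index 0 give zero blocks of the permutation matrix. *)
Definition preserves_blocks (k : nat) (f : nat -> nat -> nat * nat) (p : nat) : Prop :=
  forall c, (forall s, (s < k)%N -> (f p (1 + k * c + s)%N).2 = 0%N) \/
    exists q c', forall s, (s < k)%N -> f p (1 + k * c + s)%N = (q, 1 + k * c' + s)%N.

Section PermutationMatrix.
Local Open Scope ring_scope.

Variables (a b : nat) (f g : nat -> nat -> nat * nat).
Hypotheses (fK : cancel_into a b f g) (gK : cancel_into b a g f).

Lemma perm_mxR_tr (p : 'I_a) (q : 'I_b) i j :
  perm_mxR b a g q p j i = perm_mxR a b f p q i j.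
Proof.
rewrite /perm_mxR; congr (if _ then _ else _); apply/eqP/eqP => E.
  by have [<- _] := gK j (ltn_ord q); rewrite E.
by have [<- _] := fK i (ltn_ord p); rewrite E.
Qed.

Lemma perm_mxR_mul : mx_prod_is (perm_mxR a b f) (perm_mxR b a g) (@mx_idR a).
Proof.
move=> p p' i i'; exists (f p i).2.+1 => M hM.
have [fpiK fpi_lt] := fK i (ltn_ord p).
have -> : \sum_(q < b) \sum_(l < M) perm_mxR a b f p q i l * perm_mxR b a g q p' l i' =
    \sum_(q < b) (if (q : nat) == (f p i).1 then
      \sum_(l < M) (if (l : nat) == (f p i).2 then (if f p' i' == f p i then 1 else 0) else 0) else 0).
  apply: eq_bigr => q _; case: eqP => [Eq|Nq]; last first.
    by rewrite big1 // => l _; rewrite /perm_mxR; case: eqP => [E|_]; [rewrite E in Nq | rewrite mul0r].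
  apply: eq_bigr => l _; rewrite perm_mxR_tr /perm_mxR; case: eqP => [El|Nl].
    by rewrite El eqxx mul1r.
  by rewrite mul0r; case: eqP => // El; case: Nl; rewrite Eq El -surjective_pairing.
rewrite !sum_ord_eq // /mx_idR /idR /zeroR.
have -> : (f p' i' == f p i) = (p' == p) && (i' == i).
  apply/eqP/andP => [E|[/eqP-> /eqP->]] //.
  by have [+ _] := fK i' (ltn_ord p'); rewrite E fpiK => -[/val_inj-> ->].
by rewrite eq_sym [i' == i]eq_sym; case: (p == p').
Qed.

Lemma perm_mxR_inR (p : 'I_a) (q : 'I_b) : inR (perm_mxR a b f p q).
Proof.
split=> [i|j].
  exists (f p i).2.+1 => j hj; rewrite /perm_mxR.
  by case: eqP => // E; move: hj; rewrite E /=; lia.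
exists (g q j).2.+1 => i hi; rewrite -perm_mxR_tr /perm_mxR.
by case: eqP => // E; move: hi; rewrite E /=; lia.
Qed.

Lemma perm_mxR_inRk k (p : 'I_a) (q : 'I_b) :
  preserves_blocks k f p -> inRk k (perm_mxR a b f p q).
Proof.
move=> hf; split; first exact: perm_mxR_inR.
exists 0%N => c c' _; rewrite /perm_mxR.
case: (hf c) => [h0|[q0 [c0 h]]].
  exists 0 => s s' hs _; move: (h0 s hs); case: (f p _) => x y /= ->.
  by rewrite xpair_eqE -addnA add1n andbF; case: (s == s').
exists (if (q0 == q) && (c0 == c') then 1 else 0) => s s' hs hs'.
rewrite h // xpair_eqE -!addnA eqn_add2l eqn_block //.
by do 3 case: eqP.
Qed.
End PermutationMatrix.

Lemma inRk_perm_mxR_tr k a b (f g : nat -> nat -> nat * nat) (p : 'I_a) (q : 'I_b) :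
  cancel_into a b f g -> cancel_into b a g f -> preserves_blocks k f p ->
  inRk k (perm_mxR b a g q p).
Proof.
move=> fK gK hf; apply: (inRk_transpose (perm_mxR_inRk fK gK q hf)) => j i.
exact: perm_mxR_tr.
Qed.

Section Reindex.
Variables (k m t : nat).
Hypotheses (hk : 0 < k) (hm : 0 < m).
Local Notation n := (m + k * t).

(* Index [0] of each coordinate is
   kept; the [u]-th source block, counted as [u = c * m + p], goes to
   index [0] of the coordinates [m + k * u + s] when [u < t], and onto the
   [(u - t)]-th target block, counted as [c' * n + q], otherwise. *)
Definition reindex (p i : nat) : nat * nat :=
  if i is i'.+1 then
    let u := i' %/ k * m + p in
    if u < t then (m + k * u + i' %% k, 0)
    else ((u - t) %% n, 1 + k * ((u - t) %/ n) + i' %% k)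
  else (p, 0).

Definition reindex_inv (q j : nat) : nat * nat :=
  if j is j'.+1 then
    let u := j' %/ k * n + q + t in (u %% m, 1 + k * (u %/ m) + j' %% k)
  else if q < m then (q, 0)
  else let u := (q - m) %/ k in (u %% m, 1 + k * (u %/ m) + (q - m) %% k).

Lemma reindexK : cancel_into m n reindex reindex_inv.
Proof.
move=> p i hp; case: i => [|i] /=; first by rewrite hp; split => //; lia.
have hs : i %% k < k by rewrite ltn_mod.
have um : (i %/ k * m + p) %% m = p by rewrite modnMDl modn_small.
have ud : (i %/ k * m + p) %/ m = i %/ k by rewrite divnMDl // (divn_small hp) addn0.
case: ifP => hu /=.
- rewrite -addnA ltnNge leq_addr /= addKn divn_block // modn_block // um ud.
  split; first by congr (_, _); rewrite [in RHS](divn_eq i k); lia.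
  have : k * (i %/ k * m + p).+1 <= k * t by rewrite leq_pmul2l.
  rewrite mulnS; lia.
- set v := i %/ k * m + p - t.
  have hv : v %% n < n by rewrite ltn_mod; lia.
  rewrite add0n divn_block // modn_block // -divn_eq /v subnK ?um ?ud; last by lia.
  by split => //; congr (_, _); rewrite [in RHS](divn_eq i k); lia.
Qed.

Lemma reindex_invK : cancel_into n m reindex_inv reindex.
Proof.
move=> q j hq; case: j => [|j] /=.
- case: ifP => hqm /=; first by split.
  set w := q - m.
  have hwk : w %/ k < t by rewrite ltn_divLR // mulnC /w; lia.
  rewrite add0n divn_block ?ltn_mod // modn_block ?ltn_mod // -divn_eq hwk.
  split => //; congr (_, _); move: hqm; rewrite /w [in X in _ -> X = _](divn_eq (q - m) k); lia.
- set u := j %/ k * n + q + t.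
  rewrite add0n divn_block ?ltn_mod // modn_block ?ltn_mod // -divn_eq.
  rewrite ltnNge /u leq_addl /= addnK modnMDl modn_small // divnMDl ?(divn_small hq) ?addn0 //; last by lia.
  by split => //; congr (_, _); rewrite [in RHS](divn_eq j k); lia.
Qed.

Lemma reindex_preserves_blocks p : preserves_blocks k reindex p.
Proof.
have reindex_block c s : s < k -> reindex p (1 + k * c + s) =
    if c * m + p < t then (m + k * (c * m + p) + s, 0)
    else ((c * m + p - t) %% n, 1 + k * ((c * m + p - t) %/ n) + s).
  by move=> hs; rewrite -addnA add1n /= divn_block // modn_block.
move=> c; case: (ltnP (c * m + p) t) => hu; [left|right] => [s hs|].
  by rewrite reindex_block // hu.
by exists ((c * m + p - t) %% n), ((c * m + p - t) %/ n) => s hs; rewrite reindex_block // ltnNge hu.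
Qed.
End Reindex.

Lemma Rk_free_iso_addn k m t : 0 < k -> 0 < m -> Rk_free_iso k m (m + k * t).
Proof.
move=> hk hm; have fK := @reindexK k m t hk hm; have gK := @reindex_invK k m t hk hm.
exists (perm_mxR _ _ (reindex k m t)), (perm_mxR _ _ (reindex_inv k m t)).
split; [|split; [|split]].
- by move=> p q; apply: (perm_mxR_inRk fK gK); apply: reindex_preserves_blocks.
- by move=> q p; exact: (inRk_perm_mxR_tr _ fK gK (reindex_preserves_blocks _ _ _ _)).
- exact: perm_mxR_mul.
- exact: perm_mxR_mul.
Qed.

Lemma Rk_free_iso_sym k m n : Rk_free_iso k m n -> Rk_free_iso k n m.
Proof. by case=> X [Y [hX [hY [hXY hYX]]]]; exists Y, X. Qed.

Section Invariant.
Local Open Scope ring_scope.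

Lemma truncated_trace_idR a c (X : mxR a c) (Y : mxR c a) H :
  mx_prod_is X Y (@mx_idR a) ->
  eventually (fun M => \sum_(p < a) \sum_(r < c) \sum_(i < H) \sum_(l < M)
                          X p r i l * Y r p l i = (a * H)%:R).
Proof.
move=> hXY; have [N hN] : eventually (fun M => forall (p : 'I_a) i, (i < H)%N ->
    \sum_(r < c) \sum_(l < M) X p r i l * Y r p l i = 1).
  apply: (@eventually_all_fin _ (fun p M => forall i, (i < H)%N -> _)) => p.
  apply: (@eventually_all_ltn H (fun i M => _)) => i _.
  by have [N hN] := hXY p p i i; exists N => M /hN ->; rewrite /mx_idR /idR !eqxx.
exists N => M hM; transitivity (\sum_(p < a) \sum_(i < H) (1 : int)).
  by apply: eq_bigr => p _; rewrite exchange_big; apply: eq_bigr => i _; apply: hN.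
by rewrite sumr_const card_ord sumr_const card_ord natrM mulr_natl.
Qed.

Variable k : nat.
Hypothesis hk : (0 < k)%N.

Definition scalar_blocks_from (A : infmx) (B : nat) : Prop :=
  forall c c' : nat, (B <= c)%N \/ (B <= c')%N ->
    exists x : int, forall s s' : nat, (s < k)%N -> (s' < k)%N ->
      A (1 + k * c + s)%N (1 + k * c' + s')%N = (if s == s' then x else 0).

Lemma inRk_eventually A : inRk k A -> eventually (fun B =>
  scalar_blocks_from A B /\ forall l, (1 + k * B <= l)%N -> A 0%N l = 0).
Proof.
move=> [[hr _] [B0 hB0]]; have [N hN] := hr 0%N.
exists (maxn B0 N) => B; rewrite geq_max => /andP[hB hNB]; split.
  by move=> c c' hc; apply: hB0; case: hc => ?; [left|right]; lia.
by move=> l hl; apply: hN; have := leq_pmull B hk; lia.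
Qed.

(* Each pair of blocks [(c, B + c')] contributes [k] times the product of the
   two block scalars; the row [0] contributes nothing. *)
Lemma cross_trace_dvd A C B D :
  scalar_blocks_from A B -> scalar_blocks_from C B ->
  (forall l, (1 + k * B <= l)%N -> A 0%N l = 0) ->
  (k%:Z %| \sum_(0 <= i < 1 + k * B) \sum_(1 + k * B <= l < 1 + k * B + k * D) A i l * C l i)%Z.
Proof.
move=> hA hC hA0.
rewrite big_ltn // big1_seq ?add0r; last first.
  by move=> l /andP[_]; rewrite mem_index_iota => /andP[hl _]; rewrite hA0 // mul0r.
rewrite big_nat_blocks; apply: rpred_sum => c _.
under eq_bigr => s _ do rewrite big_nat_blocks.
rewrite exchange_big; apply: rpred_sum => c' _.
have [x hx] := hA c (B + c')%N (or_intror (leq_addr _ _)).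
have [y hy] := hC (B + c')%N c (or_introl (leq_addr _ _)).
rewrite (eq_bigr (fun _ => x * y)) => [|s _].
  by rewrite sumr_const card_ord -mulr_natr natz dvdz_mull.
rewrite (eq_bigr (fun s' : 'I_k => if (s' : nat) == s then x * y else 0)) ?sum_ord_eq // => s' _.
have -> : (1 + k * B + k * c' = 1 + k * (B + c'))%N by rewrite mulnDr addnA.
by rewrite hx ?hy // eq_sym; case: eqP => _; rewrite ?mulr0.
Qed.

Lemma eq_mod_of_dvdz m n B :
  (k%:Z %| (m * (1 + k * B))%:R - (n * (1 + k * B))%:R)%Z -> m = n %[mod k].
Proof.
have -> : (m * (1 + k * B))%:R - (n * (1 + k * B))%:R =
          m%:Z - n%:Z + k%:Z * (B%:Z * (m%:Z - n%:Z)) :> int.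
  by rewrite !natrM !natrD !natrM !natz; ring.
rewrite rpredDr ?dvdz_mulr ?dvdzz // -eqz_mod_dvd !modz_nat => /eqP.
by case.
Qed.

Lemma Rk_free_iso_eq_mod m n : Rk_free_iso k m n -> m = n %[mod k].
Proof.
move=> [X [Y [hX [hY [hXY hYX]]]]].
have [B /(_ B (leqnn B)) hB] := eventually_all_fin (fun x : 'I_m * 'I_n =>
  eventually_and (inRk_eventually (hX x.1 x.2)) (inRk_eventually (hY x.2 x.1))).
set H := (1 + k * B)%N.
have [N /(_ (H + k * N)%N) []] :=
  eventually_and (truncated_trace_idR H hXY) (truncated_trace_idR H hYX).
  by have := leq_pmull N hk; lia.
set M := (H + k * N)%N => trXY trYX.
apply: (@eq_mod_of_dvdz m n B); rewrite -trXY -trYX [T in _ - T]exchange_big /=.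
rewrite -sumrB; apply: rpred_sum => p _; rewrite -sumrB; apply: rpred_sum => q _.
under [T in _ - T]eq_bigr => l _ do under eq_bigr => i _ do rewrite mulrC.
rewrite (truncated_trace_swap (fun i l => X p q i l * Y q p l i)) ?leq_addr //.
have [[hXB hX0] [hYB hY0]] := hB (p, q).
apply: rpredB; first exact: cross_trace_dvd.
under eq_bigr => l _ do under eq_bigr => i _ do rewrite mulrC.
exact: cross_trace_dvd.
Qed.
End Invariant.

Theorem theorem3 (k : nat) (hk : (0 < k)%N) (m n : nat) (hm : (0 < m)%N) (hn : (0 < n)%N) :
  Rk_free_iso k m n <-> m = n %[mod k].
Proof.
split; first exact: Rk_free_iso_eq_mod.
have iso_le a b : 0 < a -> a <= b -> a = b %[mod k] -> Rk_free_iso k a b.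
  move=> ha hab hmod; have /dvdnP[t ht] : k %| b - a by rewrite -eqn_mod_dvd // hmod.
  by rewrite -(subnKC hab) ht mulnC; apply: Rk_free_iso_addn.
move=> hmn; have [hle|/ltnW hge] := leqP m n; first exact: iso_le.
by apply/Rk_free_iso_sym/iso_le.
Qed.
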